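(* Let $G$ be a finite abelian group. Let $n \in \mathbb{N}_0$ and let $\overline{\ell}=(\ell_1,\dots, \ell_n) \in \mathbb{N}^n$ with $\ell_{i}< \ell_{i+1}$ for each $i \in [1, n-1]$. For $m \in \mathbb{N}_0$ and $i \in [1,n]$, define recursively \[k_{i}^{\overline{\ell}}(m) = \max\left\{0 , \left \lceil \frac{ m - ( \sum_{j=1}^{i-1} k_j^{\overline{\ell}}(m)\ell_j ) - \mathsf{s}_{\le \ell_{i}}(G) + 1}{\ell_i}\right \rceil \right\}\] and \[k_{n+1}^{\overline{\ell}}(m)= \max \left\{0, \left\lceil \frac{ m - \sum_{j=1}^{n} k_j^{\overline{\ell}}(m)\ell_j }{\mathsf{D}(G)}\right \rceil \right\}.\] (1) For every zero-sum sequence $B$ over $G$, $\max \mathsf{L}(B) \ge \sum_{i=1}^{n+1} k_i^{\overline{\ell}}(|B|)$. (2) Let $k \in \mathbb{N}$ and let $M\in \mathbb{N}$ be maximal such that $\sum_{i=1}^{n+1} k_i^{\overline{\ell}}(M) \le k$. Then $\mathsf{D}_{k}(G)\le M$.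
   Context: A sequence over $G$ is a finite unordered list of elements of $G$ with repetitions allowed; $|S|$ is its length. A zero-sum sequence has terms summing to $0$; a minimal zero-sum sequence is a non-empty zero-sum sequence with no proper non-empty zero-sum subsequence. For a zero-sum sequence $B$, $\mathsf{L}(B)$ is the set of all $t$ such that $B$ is a product of $t$ minimal zero-sum sequences. $\mathsf{D}_k(G)$ is the smallest $\ell$ such that every sequence of length at least $\ell$ has $k$ disjoint non-empty zero-sum subsequences; $\mathsf{D}(G)=\mathsf{D}_1(G)$. For $\ell\in\mathbb{N}$, $\mathsf{s}_{\le \ell}(G)\in\mathbb{N}\cup\{\infty\}$ is the smallest $n$ such that every sequence over $G$ of length at least $n$ has a non-empty zero-sum subsequence of length at most $\ell$. $[a,b]$ denotes the integers between $a$ and $b$. *)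

From HB Require Import structures.
From mathcomp Require Import all_boot all_order all_algebra.
From Stdlib Require Import ClassicalEpsilon Wf_nat.
Set Implicit Arguments. Unset Strict Implicit. Unset Printing Implicit Defensive.
Import Order.TTheory GRing.Theory Num.Theory.

(* Sequences over G are modelled by [seq G] up to permutation ([perm_eq]). *)

(* Least natural number satisfying P, or None (= infinity) if there is none. *)
Lemma least_ex (P : nat -> Prop) :
  (exists n, P n) -> exists n, P n /\ forall m, P m -> n <= m.
Proof.
move=> H.
have [n [[Pn Hmin] _]] :=
  dec_inh_nat_subset_has_unique_least_element P (fun n => classic (P n)) H.
by exists n; split=> // m Pm; apply/ssrnat.leP; apply: Hmin.
Qed.

Definition min_nat (P : nat -> Prop) : option nat :=
  match excluded_middle_informative (exists n, P n) with
  | left H => Some (proj1_sig (constructive_indefinite_description _ (least_ex H)))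
  | right _ => None
  end.

Local Open Scope ring_scope.

Definition seq_sum (G : finZmodType) (s : seq G) : G := \sum_(x <- s) x.
Definition zero_sum (G : finZmodType) (s : seq G) : Prop := seq_sum s = 0.

(* U is a subsequence of T with complement V  <->  perm_eq T (U ++ V) *)
Definition minimal_zero_sum (G : finZmodType) (T : seq G) : Prop :=
  [/\ T != [::], zero_sum T &
      forall U V : seq G, perm_eq T (U ++ V) -> U != [::] -> zero_sum U -> V = [::]].

Definition in_L (G : finZmodType) (B : seq G) (t : nat) : Prop :=
  exists Ts : seq (seq G),
    [/\ size Ts = t, (forall T, T \in Ts -> minimal_zero_sum T) & perm_eq B (flatten Ts)].

Definition has_disjoint_zs (G : finZmodType) (k : nat) (S : seq G) : Prop :=
  exists (Ts : seq (seq G)) (R : seq G),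
    [/\ size Ts = k, (forall T, T \in Ts -> T != [::] /\ zero_sum T)
      & perm_eq S (flatten Ts ++ R)].

Definition Dk (G : finZmodType) (k : nat) : option nat :=
  min_nat (fun n => forall S : seq G, (n <= size S)%N -> has_disjoint_zs k S).

(* D(G) = D_1(G), as a natural number (D_1(G) is finite for finite G) *)
Definition Dav (G : finZmodType) : nat := odflt 0%N (Dk G 1).

Definition has_short_zs (G : finZmodType) (l : nat) (S : seq G) : Prop :=
  exists U V : seq G,
    [/\ perm_eq S (U ++ V), U != [::], zero_sum U & (size U <= l)%N].

Definition s_le (G : finZmodType) (l : nat) : option nat :=
  min_nat (fun n => forall S : seq G, (n <= size S)%N -> has_short_zs l S).

Definition kval (G : finZmodType) (l m : nat) (acc : int) : int :=
  match s_le G l with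
  | None => 0
  | Some s => Num.max 0 (Num.ceil ((m%:~R - acc%:~R - s%:~R + 1) / l%:~R : rat))
  end.

(* kpref G ls m i = [:: k_1(m); ...; k_i(m)] for ls = (l_1, ..., l_n) *)
Fixpoint kpref (G : finZmodType) (ls : seq nat) (m : nat) (i : nat) : seq int :=
  match i with
  | 0 => [::]
  | i'.+1 =>
    let p := kpref G ls m i' in
    rcons p (kval G (nth 0%N ls i') m
                  (\sum_(j < i') nth 0 p j * (nth 0%N ls j)%:~R))
  end.

Definition klast (G : finZmodType) (ls : seq nat) (m : nat) : int :=
  let p := kpref G ls m (size ls) in
  Num.max 0 (Num.ceil ((m%:~R - (\sum_(j < size ls) nth 0 p j * (nth 0%N ls j)%:~R)%:~R)
                       / (Dav G)%:~R : rat)).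

Definition ktot (G : finZmodType) (ls : seq nat) (m : nat) : int :=
  \sum_(j < size ls) nth 0 (kpref G ls m (size ls)) j + klast G ls m.

From HB Require Import structures.
From mathcomp Require Import all_boot all_order all_algebra.
From mathcomp Require Import zify.
From Stdlib Require Import Classical ClassicalEpsilon.
Import Order.TTheory GRing.Theory Num.Theory.
Set Implicit Arguments. Unset Strict Implicit.
Local Open Scope ring_scope.

(* Part (1) is a greedy factorization.  For i = 1, ..., n, as long as the
   remainder of B is at least s_{<= l_i}(G) long, it contains a zero-sum
   subsequence of length at most l_i, hence a minimal one of length at most
   l_i, which is split off; k_i(|B|) is exactly the number of such steps the
   length count guarantees.  The zero-sum remainder then factors into minimal
   zero-sum sequences, each of length at most D(G).
   For part (2), a sequence S with |S| >= M is extended by -sigma(S); by the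
   maximality of M and part (1) the extension has a factorization into more
   than k atoms, and dropping the atom containing the new term leaves k
   disjoint zero-sum subsequences of S. *)

Lemma min_nat_Some (P : nat -> Prop) d : min_nat P = Some d -> P d.
Proof.
rewrite /min_nat; case: excluded_middle_informative => // H [<-].
by case: (constructive_indefinite_description _ _) => /= x [].
Qed.

Lemma min_nat_le (P : nat -> Prop) n :
  P n -> exists d, min_nat P = Some d /\ (d <= n)%N.
Proof.
move=> Pn; rewrite /min_nat; case: excluded_middle_informative => H.
  case: (constructive_indefinite_description _ _) => /= x [_ hx].
  by exists x; split=> //; apply: hx.
by exfalso; apply: H; exists n.
Qed.

Lemma max0_ceil_div_le (x : int) (D t : nat) :
  x <= (t * D)%N%:Z -> Num.max 0 (Num.ceil (x%:~R / D%:~R : rat)) <= t%:Z.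
Proof.
move=> hx; case: (posnP D) => [->|hD].
  by rewrite invr0 mulr0 ceil0 maxxx.
rewrite ge_max /= ceil_le_int ler_pdivrMr ?ltr0z //.
by rewrite -intrM ler_int -PoszM.
Qed.

Lemma max0_ceil_div_pred_lt (x : int) (l : nat) :
  0 < Num.max 0 (Num.ceil (x%:~R / l%:~R : rat)) ->
  (Num.max 0 (Num.ceil (x%:~R / l%:~R : rat)) - 1) * l%:Z < x.
Proof.
case: (posnP l) => [->|hl]; first by rewrite invr0 mulr0 ceil0 maxxx ltxx.
have := ceilB1_lt (x%:~R / l%:~R : rat).
rewrite ltr_pdivlMr ?ltr0z // -intrM ltr_int.
by case: (leP 0 (Num.ceil _)) => // _ hlt _.
Qed.

Section ZeroSumSequences.

Variable G : finZmodType.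
Implicit Types (S T U V R : seq G) (Ts : seq (seq G)).

Lemma seq_sum_cat S T : seq_sum (S ++ T) = seq_sum S + seq_sum T.
Proof. exact: big_cat. Qed.

Lemma seq_sum_perm S T : perm_eq S T -> seq_sum S = seq_sum T.
Proof. exact: perm_big. Qed.

Lemma zero_sum_flatten Ts :
  (forall T, T \in Ts -> zero_sum T) -> zero_sum (flatten Ts).
Proof.
elim: Ts => [|T Ts IH] h; first exact: big_nil.
rewrite /zero_sum /= seq_sum_cat (h T (mem_head _ _)) IH ?add0r // => T' hT'.
by apply: h; rewrite in_cons hT' orbT.
Qed.

Lemma zero_sum_rcons_opp S : zero_sum (rcons S (- seq_sum S)).
Proof. by rewrite /zero_sum -cats1 seq_sum_cat /seq_sum big_seq1 subrr. Qed.

Lemma zero_sum_perm_catr S U V :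
  perm_eq S (U ++ V) -> zero_sum S -> zero_sum U -> zero_sum V.
Proof.
move=> hp; rewrite /zero_sum (seq_sum_perm hp) seq_sum_cat => hS hU.
by rewrite -hS hU add0r.
Qed.

Lemma minimal_zero_sum_subseq U :
  U != [::] -> zero_sum U -> exists T W, perm_eq U (T ++ W) /\ minimal_zero_sum T.
Proof.
elim: {U}(size U) {-2}U (leqnn (size U)) => [|n IH] U hs hU hz.
  by case: U hs hU hz.
have [hm|hm] := classic (minimal_zero_sum U); first by exists U, [::]; rewrite cats0.
have [[U1 [V1 [hp hU1 hz1 hV1]]]|hn] := classic (exists U1 V1,
    [/\ perm_eq U (U1 ++ V1), U1 != [::], zero_sum U1 & V1 != [::]]).
  have hsz : size U = (size U1 + size V1)%N by rewrite (perm_size hp) size_cat.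
  have hV1pos : (0 < size V1)%N by case: (V1) hV1.
  have [T [W [hpT hmT]]] := IH U1 ltac:(lia) hU1 hz1.
  exists T, (W ++ V1); split=> //.
  by rewrite catA; apply: (perm_trans hp); rewrite perm_cat2r.
exfalso; apply: hm; split=> // U1 V1 hp hU1 hz1.
by have [//|hV1] := eqVneq V1 [::]; case: hn; exists U1, V1.
Qed.

Lemma zero_sum_factorization R :
  zero_sum R ->
  exists Ts, (forall T, T \in Ts -> minimal_zero_sum T) /\ perm_eq R (flatten Ts).
Proof.
elim: {R}(size R) {-2}R (leqnn (size R)) => [|n IH] R hs hz.
  by case: R hs hz => // _ _; exists [::].
have [->|hR] := eqVneq R [::]; first by exists [::].
have [T [W [hp hm]]] := minimal_zero_sum_subseq hR hz.
have [hT hzT _] := hm.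
have hsz : size R = (size T + size W)%N by rewrite (perm_size hp) size_cat.
have hTpos : (0 < size T)%N by case: (T) hT.
have [Ts [hall hpW]] := IH W ltac:(lia) (zero_sum_perm_catr hp hz hzT).
exists (T :: Ts); split.
  by move=> T'; rewrite in_cons => /orP [/eqP ->|]; [|apply: hall].
by apply: (perm_trans hp); rewrite /= perm_cat2l.
Qed.

Lemma minimal_zero_sum_size_le_Dav T :
  (0 < Dav G)%N -> minimal_zero_sum T -> (size T <= Dav G)%N.
Proof.
rewrite /Dav; case hD: (Dk G 1) => [D|] //= _ [hne _ hmin].
(* Removing one term of T leaves a sequence without non-empty zero-sum
   subsequences, which is therefore shorter than D(G). *)
rewrite leqNgt; apply/negP => hlt.
case: T hne hmin hlt => // x T _ hmin /= hlt.
have [Ts [R [hsz hall hp]]] := min_nat_Some hD T ltac:(lia).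
case: Ts hsz hall hp => [|U [|]] //= _ hall hp.
have [hU hzU] := hall U (mem_head _ _).
have hpx : perm_eq (x :: T) (U ++ x :: R).
  by rewrite -[x :: R]cat1s perm_sym perm_catCA /= perm_cons perm_sym -(cats0 U).
by have := hmin _ _ hpx hU hzU.
Qed.

Lemma size_factorization_le_Dav R Ts :
  (0 < Dav G)%N -> (forall T, T \in Ts -> minimal_zero_sum T) ->
  perm_eq R (flatten Ts) -> (size R <= size Ts * Dav G)%N.
Proof.
move=> hD hall /perm_size ->; rewrite size_flatten.
elim: Ts hall => [|T Ts IH] hall //=.
rewrite mulSn leq_add //.
  by apply: minimal_zero_sum_size_le_Dav => //; apply: hall; exact: mem_head.
by apply: IH => T' hT'; apply: hall; rewrite in_cons hT' orbT.
Qed.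

Lemma short_minimal_zero_sums l s k S :
  (forall S' : seq G, (s <= size S')%N -> has_short_zs l S') ->
  ((0 < k)%N -> (k.-1 * l + s <= size S)%N) ->
  exists Ts R, [/\ size Ts = k, (forall T, T \in Ts -> minimal_zero_sum T),
                   (sumn (map size Ts) <= k * l)%N & perm_eq S (flatten Ts ++ R)].
Proof.
move=> short; elim: k S => [|k IH] S hS; first by exists [::], S.
have {}hS : (k * l + s <= size S)%N by apply: hS.
have [U [V [hp hU hzU hsU]]] : has_short_zs l S by apply: short; lia.
have [T [W [hpU hm]]] := minimal_zero_sum_subseq hU hzU.
have hsz : size S = (size T + size (W ++ V))%N.
  by rewrite (perm_size hp) !size_cat (perm_size hpU) size_cat addnA.
have hsT : (size T <= l)%N.
  by apply: leq_trans hsU; rewrite (perm_size hpU) size_cat leq_addr.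
have [|Ts [R [hsz' hall hsum hp']]] := IH (W ++ V).
  by case: k {IH} hS => // k; rewrite mulSn /=; lia.
exists (T :: Ts), R; split=> /=.
- by rewrite hsz'.
- by move=> T'; rewrite in_cons => /orP [/eqP ->|]; [|apply: hall].
- by rewrite mulSn leq_add.
- apply: (perm_trans hp); rewrite -catA.
  apply: (@perm_trans _ ((T ++ W) ++ V)); first by rewrite perm_cat2r.
  by rewrite -catA perm_cat2l.
Qed.

Lemma has_disjoint_zs_rcons S g Ts k :
  (forall T, T \in Ts -> minimal_zero_sum T) ->
  perm_eq (rcons S g) (flatten Ts) -> (k < size Ts)%N -> has_disjoint_zs k S.
Proof.
move=> hall hp hk.
have /flattenP [T0 hT0 hgT0] : g \in flatten Ts.
  by rewrite -(perm_mem hp) mem_rcons mem_head.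
set Ts' := rem T0 Ts.
have hS : perm_eq S (rem g T0 ++ flatten Ts').
  rewrite -(perm_cons g); apply: (@perm_trans _ (rcons S g)).
    by rewrite perm_sym perm_rcons.
  apply: (perm_trans hp); apply: (perm_trans (perm_flatten (perm_to_rem hT0))).
  by rewrite /= -cat_cons perm_cat2r perm_to_rem.
have hk' : (k <= size Ts')%N by rewrite size_rem //; case: (size Ts) hk.
exists (take k Ts'), (flatten (drop k Ts') ++ rem g T0); split.
- by rewrite size_take_min; apply/minn_idPl.
- by move=> T /mem_take /mem_rem /hall [].
- apply: (perm_trans hS).
  by rewrite -{1}(cat_take_drop k Ts') flatten_cat perm_catCA perm_cat2l perm_catC.
Qed.

End ZeroSumSequences.

Definition kweight (ls : seq nat) (p : seq int) (i : nat) : int :=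
  \sum_(j < i) nth 0 p j * (nth 0%N ls j)%:~R.

Lemma kweightS ls p i :
  kweight ls p i.+1 = kweight ls p i + nth 0 p i * (nth 0%N ls i)%:~R.
Proof. exact: big_ord_recr. Qed.

Section Coefficients.

Variables (G : finZmodType) (ls : seq nat).

Lemma size_kpref m i : size (kpref G ls m i) = i.
Proof. by elim: i => //= i IH; rewrite size_rcons IH. Qed.

Lemma nth_kpref_le m i n j :
  (i <= n)%N -> (j < i)%N -> nth 0 (kpref G ls m i) j = nth 0 (kpref G ls m n) j.
Proof.
elim: n => [|n IH] hin hj; first by move: hin hj; rewrite leqn0 => /eqP ->.
move: hin; rewrite leq_eqVlt => /orP [/eqP -> //|hin].
by rewrite IH //= nth_rcons size_kpref (leq_trans hj hin).
Qed.

Lemma kweight_kpref_le m i n :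
  (i <= n)%N -> kweight ls (kpref G ls m i) i = kweight ls (kpref G ls m n) i.
Proof. by move=> hin; apply: eq_bigr => j _; rewrite (nth_kpref_le _ hin). Qed.

Lemma nth_kpref m n i : (i < n)%N ->
  nth 0 (kpref G ls m n) i =
  kval G (nth 0%N ls i) m (kweight ls (kpref G ls m n) i).
Proof.
move=> hin; rewrite -(nth_kpref_le _ hin) // -(kweight_kpref_le _ (ltnW hin)) /=.
by rewrite nth_rcons size_kpref ltnn eqxx.
Qed.

Lemma klastE m : klast G ls m =
  Num.max 0 (Num.ceil ((m%:Z - kweight ls (kpref G ls m (size ls)) (size ls))%:~R
                        / (Dav G)%:~R : rat)).
Proof. by rewrite /klast intrB. Qed.

End Coefficients.

Lemma kval_extraction (G : finZmodType) (l m : nat) (acc : int) (R : seq G) :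
  m%:Z - acc <= (size R)%:Z ->
  exists Ts R', [/\ (size Ts)%:Z = kval G l m acc,
                    (forall T, T \in Ts -> minimal_zero_sum T),
                    perm_eq R (flatten Ts ++ R') &
                    m%:Z - (acc + kval G l m acc * l%:~R) <= (size R')%:Z].
Proof.
move=> hR; rewrite /kval; case hs: (s_le G l) => [s|]; last first.
  by exists [::], R; rewrite mul0r addr0.
set x : int := m%:Z - acc - s%:Z + 1.
have -> : (m%:~R - acc%:~R - s%:~R + 1 : rat) = x%:~R by rewrite /x intrD !intrB.
set k := Num.max 0 _.
have [n kE] : exists n : nat, k = n by exists `|k|%N; rewrite gez0_abs // le_max lexx.
have hpred : (0 < n)%N -> (n.-1 * l + s <= size R)%N.
  move=> hn; have := @max0_ceil_div_pred_lt x l; rewrite -/k kE ltz_nat => /(_ hn).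
  by rewrite /x; case: n hn {kE} => // n _; rewrite -[n.+1]addn1 PoszD addrK -PoszM; lia.
have [Ts [R' [hsz hall hsum hp]]] := short_minimal_zero_sums (min_nat_Some hs) hpred.
exists Ts, R'; split=> //; first by rewrite hsz kE.
rewrite kE intz -PoszM opprD addrA lerBlDr; apply: (le_trans hR).
by rewrite (perm_size hp) size_cat size_flatten PoszD addrC lerD2l lez_nat.
Qed.

Section Factorizations.

Variables (G : finZmodType) (ls : seq nat).

Lemma kpref_extraction (B : seq G) i :
  let P := kpref G ls (size B) (size ls) in (i <= size ls)%N ->
  exists Ts R, [/\ (size Ts)%:Z = \sum_(j < i) nth 0 P j,
                   (forall T, T \in Ts -> minimal_zero_sum T),
                   perm_eq B (flatten Ts ++ R) &
                   (size B)%:Z - kweight ls P i <= (size R)%:Z].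
Proof.
move=> P; elim: i => [|i IH] hi.
  by exists [::], B; rewrite /kweight !big_ord0 subr0.
have [Ts [R [hsz hall hp hR]]] := IH (ltnW hi).
have [Ts' [R' [hsz' hall' hp' hR']]] := kval_extraction (nth 0%N ls i) hR.
exists (Ts ++ Ts'), R'; split.
- by rewrite size_cat PoszD hsz hsz' big_ord_recr /= nth_kpref.
- by move=> T; rewrite mem_cat => /orP [/hall|/hall'].
- by rewrite flatten_cat -catA; apply: (perm_trans hp); rewrite perm_cat2l.
- by rewrite kweightS /P nth_kpref.
Qed.

Lemma exists_factorization_ge_ktot (B : seq G) :
  zero_sum B -> exists t : nat, in_L B t /\ ktot G ls (size B) <= t%:Z.
Proof.
move=> hB; have [Ts [R [hsz hall hp hR]]] := kpref_extraction B (leqnn (size ls)).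
have hzR : zero_sum R.
  by apply: zero_sum_perm_catr hp hB _; apply: zero_sum_flatten => T /hall [].
have [Ts' [hall' hp']] := zero_sum_factorization hzR.
exists (size (Ts ++ Ts')); split.
  exists (Ts ++ Ts'); split=> //.
    by move=> T; rewrite mem_cat => /orP [/hall|/hall'].
  by rewrite flatten_cat; apply: (perm_trans hp); rewrite perm_cat2l.
rewrite /ktot size_cat PoszD -hsz lerD2l klastE.
have [->|hD] := posnP (Dav G); first by rewrite invr0 mulr0 ceil0 maxxx.
apply: max0_ceil_div_le; apply: (le_trans hR); rewrite lez_nat.
exact: size_factorization_le_Dav hall' hp'.
Qed.

Lemma has_disjoint_zs_of_lt_ktot (S : seq G) k :
  k%:Z < ktot G ls (size S).+1 -> has_disjoint_zs k S.
Proof.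
move=> hk; have [t [[Ts [hsz hall hp]] ht]] :=
  exists_factorization_ge_ktot (zero_sum_rcons_opp S).
apply: has_disjoint_zs_rcons hall hp _; rewrite hsz -(ltz_nat k).
by apply: (lt_le_trans _ ht); rewrite size_rcons.
Qed.

End Factorizations.

Theorem proposition3p2 (G : finZmodType) (ls : seq nat) :
  (forall l, l \in ls -> (0 < l)%N) -> sorted ltn ls ->
  (forall B : seq G, zero_sum B ->
     exists t : nat, in_L B t /\ ktot G ls (size B) <= t%:Z) /\
  (forall k M : nat, (0 < k)%N -> (0 < M)%N ->
     ktot G ls M <= k%:Z ->
     (forall M' : nat, (0 < M')%N -> ktot G ls M' <= k%:Z -> (M' <= M)%N) ->
     exists d, Dk G k = Some d /\ (d <= M)%N).
Proof.
move=> _ _; split; first exact: exists_factorization_ge_ktot.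
move=> k M _ _ _ hmax; apply: min_nat_le => S hMS.
apply: (has_disjoint_zs_of_lt_ktot (ls := ls)); rewrite ltNge; apply/negP => hle.
by have := hmax _ (ltn0Sn _) hle; rewrite ltnNge hMS.
Qed.
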